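(* For every admissible pair $(a,b)$ (as described in the context), the canonical cube category $\mathbb{C}_{(a,b)}$ is isomorphic to the monoidal subcategory $\mathcal{S}_{(a,b)}$ of $(\mathbf{Top},\times,1)$ generated by the interval $[0,1]$ with respect to the language $L_{(a,b)}$.
   Context: Structural rules: $\mathsf{w}$ (weakening), $\mathsf{e}$ (exchange), $\mathsf{c}$ (contraction). The admissible sets of structural rules $a$ are $\emptyset,\{\mathsf w\},\{\mathsf e\},\{\mathsf w,\mathsf e\},\{\mathsf e,\mathsf c\},\{\mathsf w,\mathsf e,\mathsf c\}$. The admissible signatures $b$ are $(0,1)$, $(0,1,\vee)$, $(0,1,\wedge)$, $(0,1,\vee,\wedge)$, $(0,1,{}')$, $(0,1,\vee,\wedge,{}')$, where $0,1$ are constants, $\vee,\wedge$ binary and ${}'$ unary. The language $L_{(a,b)}$ has terms built from variables and the function symbols of $b$. The canonical cube category $\mathbb{C}_{(a,b)}$ is the syntactic (strict monoidal) category of the theory of the structure $[0,1]$ (with $0,1$ the endpoints, $x\vee y=\max\{x,y\}$, $x\wedge y=\min\{x,y\}$, $x'=1-x$) in $L_{(a,b)}$: its objects are $[n]$, $n\ge 0$ (contexts of $n$ variables $x_1,\dots,x_n$), with $[m]\otimes[n]=[m+n]$; a morphism $[m]\to[n]$ is an $n$-tuple $(t_1,\dots,t_n)$ of terms in the context $x_1,\dots,x_m$ such that, listing all variable occurrences in $t_1,\dots,t_n$ from left to right, every variable occurs unless $\mathsf w\in a$, the variables occur in the order $x_1,\dots,x_m$ unless $\mathsf e\in a$, and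 no variable occurs twice unless $\mathsf c\in a$; two such tuples are identified when they define the same function $[0,1]^m\to[0,1]^n$; composition is substitution. The subcategory $\mathcal S_{(a,b)}$ of $\mathbf{Top}$ has objects $[0,1]^n$ and morphisms generated, under composition and cartesian product of maps, by identities, the operations of $b$ on $[0,1]$ (the points $0,1:1\to[0,1]$, $\max$, $\min$, $x\mapsto 1-x$ as applicable), and the structural maps allowed by $a$: the map $[0,1]\to 1$ if $\mathsf w\in a$, the swap $[0,1]^2\to[0,1]^2$ if $\mathsf e\in a$, the diagonal $[0,1]\to[0,1]^2$ if $\mathsf c\in a$. *)

From HB Require Import structures.
From mathcomp Require Import all_boot all_order all_algebra.
From mathcomp Require Import reals.
From mathcomp Require Import lra.

Set Implicit Arguments.
Unset Strict Implicit.
Unset Printing Implicit Defensive.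

Import Order.TTheory GRing.Theory Num.Theory.
Local Open Scope ring_scope.

(* A set of structural rules: which of w (weakening), e (exchange),
   c (contraction) it contains. *)
Record struct_rules := StructRules { has_w : bool; has_e : bool; has_c : bool }.

(* Admissible sets: {}, {w}, {e}, {w,e}, {e,c}, {w,e,c}
   i.e. exactly those where c implies e. *)
Definition admissible_rules (a : struct_rules) : bool := has_c a ==> has_e a.

(* A signature: constants 0,1 always; which of join, meet, negation. *)
Record signature := Signature { has_join : bool; has_meet : bool; has_neg : bool }.

(* Admissible signatures: (0,1), (0,1,v), (0,1,^), (0,1,v,^), (0,1,'),
   (0,1,v,^,') i.e. exactly those where ' implies (v present iff ^ present). *)
Definition admissible_sig (b : signature) : bool :=
  has_neg b ==> (has_join b == has_meet b).

(* Terms of L_(a,b) in the context x_1,...,x_m (variable x_(i+1) is     *)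
(* tVar i with i : 'I_m).                                               *)

Inductive term (m : nat) : Type :=
| tVar of 'I_m
| tZero
| tOne
| tJoin of term m & term m
| tMeet of term m & term m
| tNeg of term m.

Arguments tZero {m}.
Arguments tOne {m}.

Fixpoint in_sig (b : signature) m (t : term m) : bool :=
  match t with
  | tVar _ => true
  | tZero | tOne => true
  | tJoin t1 t2 => [&& has_join b, in_sig b t1 & in_sig b t2]
  | tMeet t1 t2 => [&& has_meet b, in_sig b t1 & in_sig b t2]
  | tNeg t1 => has_neg b && in_sig b t1
  end.

Fixpoint occ m (t : term m) : seq nat :=
  match t with
  | tVar i => [:: nat_of_ord i]
  | tZero | tOne => [::]
  | tJoin t1 t2 | tMeet t1 t2 => occ t1 ++ occ t2
  | tNeg t1 => occ t1
  end.

Definition tuple_occ m n (ts : n.-tuple (term m)) : seq nat :=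
  flatten (map (@occ m) ts).

(* (t_1,...,t_n) is a morphism [m] -> [n] of C_(a,b) (before quotienting) *)
Definition admissible_tuple (a : struct_rules) (b : signature) m n
    (ts : n.-tuple (term m)) : bool :=
  [&& all (@in_sig b m) ts,
      has_w a || all (fun i => i \in tuple_occ ts) (iota 0 m),
      has_e a || sorted leq (tuple_occ ts) &
      has_c a || uniq (tuple_occ ts)].

Fixpoint subst m n (ts : n.-tuple (term m)) (t : term n) : term m :=
  match t with
  | tVar i => tnth ts i
  | tZero => tZero
  | tOne => tOne
  | tJoin t1 t2 => tJoin (subst ts t1) (subst ts t2)
  | tMeet t1 t2 => tMeet (subst ts t1) (subst ts t2)
  | tNeg t1 => tNeg (subst ts t1)
  end.

Definition id_tuple m : m.-tuple (term m) := [tuple tVar i | i < m].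

(* composite of ts : [m] -> [n] followed by us : [n] -> [p] *)
Definition comp_tuple m n p (ts : n.-tuple (term m)) (us : p.-tuple (term n))
  : p.-tuple (term m) := map_tuple (subst ts) us.

Fixpoint rename m m' (f : 'I_m -> 'I_m') (t : term m) : term m' :=
  match t with
  | tVar i => tVar (f i)
  | tZero => tZero
  | tOne => tOne
  | tJoin t1 t2 => tJoin (rename f t1) (rename f t2)
  | tMeet t1 t2 => tMeet (rename f t1) (rename f t2)
  | tNeg t1 => tNeg (rename f t1)
  end.

Definition tensor_tuple m n m' n' (ts : n.-tuple (term m)) (ts' : n'.-tuple (term m'))
  : (n + n').-tuple (term (m + m')) :=
  cat_tuple (map_tuple (rename (@lshift m m')) ts)
            (map_tuple (rename (@rshift m m')) ts').

Section Interval.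
Variable R : realType.

Definition unit_interval : Type := {x : R | (0 : R) <= x <= (1 : R)}.

Lemma i0_proof : (0 : R) <= 0 <= (1 : R). Proof. by apply/andP; split; lra. Qed.
Lemma i1_proof : (0 : R) <= 1 <= (1 : R). Proof. by apply/andP; split; lra. Qed.
Definition i0 : unit_interval := exist _ 0 i0_proof.
Definition i1 : unit_interval := exist _ 1 i1_proof.

Lemma imax_proof (x y : unit_interval) :
  0 <= Num.max (proj1_sig x) (proj1_sig y) <= (1 : R).
Proof.
move: (proj2_sig x) (proj2_sig y) => /andP[x0 x1] /andP[y0 y1].
by rewrite le_max x0 ge_max x1 y1.
Qed.
Definition imax (x y : unit_interval) : unit_interval := exist _ (Num.max (proj1_sig x) (proj1_sig y)) (imax_proof x y).

Lemma imin_proof (x y : unit_interval) :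
  0 <= Num.min (proj1_sig x) (proj1_sig y) <= (1 : R).
Proof.
move: (proj2_sig x) (proj2_sig y) => /andP[x0 x1] /andP[y0 y1].
by rewrite le_min x0 y0 ge_min x1.
Qed.
Definition imin (x y : unit_interval) : unit_interval := exist _ (Num.min (proj1_sig x) (proj1_sig y)) (imin_proof x y).

Lemma icompl_proof (x : unit_interval) : 0 <= 1 - proj1_sig x <= (1 : R).
Proof. move: (proj2_sig x) => /andP[x0 x1]; apply/andP; split; lra. Qed.
Definition icompl (x : unit_interval) : unit_interval := exist _ (1 - proj1_sig x) (icompl_proof x).

(* [0,1]^n ; [0,1]^0 is the one-point space 1 *)
Definition cube (n : nat) : Type := 'I_n -> unit_interval.

Fixpoint eval m (x : cube m) (t : term m) : unit_interval :=
  match t with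
  | tVar i => x i
  | tZero => i0
  | tOne => i1
  | tJoin t1 t2 => imax (eval x t1) (eval x t2)
  | tMeet t1 t2 => imin (eval x t1) (eval x t2)
  | tNeg t1 => icompl (eval x t1)
  end.

Definition interp m n (ts : n.-tuple (term m)) : cube m -> cube n :=
  fun x k => eval x (tnth ts k).

(* cartesian product of maps, with [0,1]^m x [0,1]^m' = [0,1]^(m+m') *)
Definition prod_map m n m' n' (f : cube m -> cube n) (g : cube m' -> cube n')
  : cube (m + m') -> cube (n + n') :=
  fun x k => match split k with
             | inl i => f (fun j => x (lshift m' j)) i
             | inr i => g (fun j => x (rshift m j)) i
             end.

Definition pt0 : cube 0 -> cube 1 := fun _ _ => i0.
Definition pt1 : cube 0 -> cube 1 := fun _ _ => i1.
Definition max_map : cube 2 -> cube 1 := fun x _ => imax (x ord0) (x ord_max).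
Definition min_map : cube 2 -> cube 1 := fun x _ => imin (x ord0) (x ord_max).
Definition compl_map : cube 1 -> cube 1 := fun x _ => icompl (x ord0).
Definition bang_map : cube 1 -> cube 0 := fun _ _ => i0. (* 'I_0 is empty *)
Definition swap_map : cube 2 -> cube 2 :=
  fun x k => if k == ord0 then x ord_max else x ord0.
Definition diag_map : cube 1 -> cube 2 := fun x _ => x ord0.

(* morphisms of S_(a,b): the maps generated under composition and
   cartesian product by identities, the operations of b and the
   structural maps allowed by a *)
Inductive genS (a : struct_rules) (b : signature) : forall m n, (cube m -> cube n) -> Prop :=
| genS_id n : genS a b (@id (cube n))
| genS_zero : genS a b pt0
| genS_one : genS a b pt1
| genS_max : has_join b -> genS a b max_map
| genS_min : has_meet b -> genS a b min_map
| genS_compl : has_neg b -> genS a b compl_map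
| genS_weak : has_w a -> genS a b bang_map
| genS_exch : has_e a -> genS a b swap_map
| genS_contr : has_c a -> genS a b diag_map
| genS_comp m n p (f : cube m -> cube n) (g : cube n -> cube p) :
    genS a b f -> genS a b g -> genS a b (g \o f)
| genS_prod m n m' n' (f : cube m -> cube n) (g : cube m' -> cube n') :
    genS a b f -> genS a b g -> genS a b (prod_map f g).

End Interval.

Arguments interp R {m n} ts x k.
Arguments eval R {m} x t.

From HB Require Import structures.
From mathcomp Require Import all_boot all_order all_algebra.
From mathcomp Require Import reals boolp.
From mathcomp Require Import zify.

Set Implicit Arguments.
Unset Strict Implicit.
Unset Printing Implicit Defensive.

(* Substituting tuples composes their interpretations and juxtaposing tuples in
   disjoint contexts takes cartesian products, so interpretation is a strict
   monoidal functor; admissibility is preserved because the occurrence list of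
   a composite concatenates occurrence lists of the inner tuple along the
   occurrence list of the outer one.  Every generator of S_(a,b) interprets an
   admissible tuple.  Conversely, an admissible tuple with k variable
   occurrences factors as the map [0,1]^m -> [0,1]^k listing the coordinates
   its occurrences name, followed by the product of its terms with each
   occurrence read from its own coordinate.  The second factor uses only the
   operations of b; the first copies, deletes and reorders coordinates exactly
   as the rules in a allow: a sorted occurrence list gives a product of
   diagonals and maps to the point, and with exchange any list is a sorted one
   followed by a permutation. *)

(** * Sequences of indices *)

Lemma flatten_subseq (T : eqType) (A B : seq (seq T)) :
  subseq A B -> subseq (flatten A) (flatten B).
Proof.
elim: B A => [|y B IH] [|x A] //=; first by rewrite sub0seq.
case: eqP => [-> /IH|_ /IH]; first exact: cat_subseq.
by move/subseq_trans; apply; apply: suffix_subseq.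
Qed.

Lemma ltn_sorted_subseq_iota n (u : seq nat) :
  sorted ltn u -> all (gtn n) u -> subseq u (iota 0 n).
Proof.
move=> u_sorted u_lt; suff -> : u = [seq j <- iota 0 n | j \in u].
  exact: filter_subseq.
apply: (irr_sorted_eq ltn_trans ltnn) => //.
  exact/sorted_filter/iota_ltn_sorted/ltn_trans.
move=> j; rewrite mem_filter mem_iota leq0n add0n.
by case: (boolP (j \in u)) => [/(allP u_lt) /= ->|].
Qed.

Lemma sorted_subseq_flatten_nth (T : eqType) (O : seq (seq T)) (u : seq nat) :
  sorted ltn u -> all (gtn (size O)) u ->
  subseq (flatten (map (nth [::] O) u)) (flatten O).
Proof.
move=> u_sorted u_lt.
have {2}-> : O = map (nth [::] O) (iota 0 (size O)) by rewrite map_nth_iota0 ?take_size.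
exact/flatten_subseq/map_subseq/ltn_sorted_subseq_iota.
Qed.

Lemma nth_perm_iota_lt k (Is : seq nat) j :
  perm_eq Is (iota 0 k) -> j < size Is -> nth 0 Is j < k.
Proof. by move=> Is_perm /(mem_nth 0); rewrite (perm_mem Is_perm) mem_iota. Qed.

Lemma sorted_leq_zeros_first (s : seq nat) : sorted leq s ->
  s = nseq (count_mem 0 s) 0 ++ map succn [seq i.-1 | i <- s & 0 < i].
Proof.
have -> : map succn [seq i.-1 | i <- s & 0 < i] = [seq i <- s | 0 < i].
  rewrite -map_comp -[RHS]map_id; apply/eq_in_map => i.
  by rewrite mem_filter => /andP[/prednK].
elim: s => [//|[|x] s IH] /= s_sorted; first by rewrite -IH // (path_sorted s_sorted).
have s_pos : all (leq 1) s.
  by apply: sub_all (order_path_min leq_trans s_sorted) => i; apply: leq_trans.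
rewrite (all_filterP s_pos) (count_memPn _) //.
by apply: contraL s_pos => s0; apply/allPn; exists 0.
Qed.

Lemma sorted_cat_map_addn m (s t : seq nat) : all (gtn m) s ->
  sorted leq s -> sorted leq t -> sorted leq (s ++ map (addn m) t).
Proof.
move=> s_lt s_sorted t_sorted.
have t_shift : sorted leq (map (addn m) t).
  by apply: homo_sorted t_sorted => x y; rewrite leq_add2l.
rewrite sorted_pairwise ?pairwise_cat -?sorted_pairwise ?s_sorted ?t_shift ?andbT //=;
  try exact: leq_trans.
apply/allrelP => x _ /(allP s_lt) /= lt_xm /mapP[y _ ->].
by rewrite ltnW // ltn_addr.
Qed.

(** * Maps selecting coordinates *)

Section Selection.
Variable R : realType.
Local Notation I := (unit_interval R).
Local Notation cube := (cube R).

(* Junk value [0] out of range. *)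
Definition cube_nth m (x : cube m) (i : nat) : I :=
  if insub i is Some j then x j else i0 R.

Lemma cube_nthE m (x : cube m) (j : 'I_m) : cube_nth x j = x j.
Proof. by rewrite /cube_nth valK. Qed.

Lemma cube_nth_ord m (x : cube m) i (lt_im : i < m) :
  cube_nth x i = x (Ordinal lt_im).
Proof. by rewrite -cube_nthE. Qed.

Lemma cube_nth_default m (x : cube m) i : m <= i -> cube_nth x i = i0 R.
Proof. by move=> le_mi; rewrite /cube_nth insubN // -leqNgt. Qed.

Lemma cube_nth_lshift m m' (x : cube (m + m')) i : i < m ->
  cube_nth (fun j => x (lshift m' j)) i = cube_nth x i.
Proof.
move=> lt_im; rewrite (cube_nth_ord _ lt_im) (cube_nth_ord _ (ltn_addr _ lt_im)).
by congr x; apply: val_inj.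
Qed.

Lemma cube_nth_rshift m m' (x : cube (m + m')) i :
  cube_nth (fun j => x (rshift m j)) i = cube_nth x (m + i).
Proof.
have [lt_im'|le_m'i] := ltnP i m'; last by rewrite !cube_nth_default ?leq_add2l.
have lt_mi : m + i < m + m' by rewrite ltn_add2l.
by rewrite (cube_nth_ord _ lt_im') (cube_nth_ord _ lt_mi); congr x; apply: val_inj.
Qed.

Definition select m k (f : nat -> nat) : cube m -> cube k :=
  fun x j => cube_nth x (f j).
Arguments select : clear implicits.

Lemma eq_select m k f g :
  (forall j, j < k -> f j = g j) -> select m k f = select m k g.
Proof. by move=> eq_fg; apply: funext => x; apply: funext => j; rewrite /select eq_fg. Qed.

Lemma select_comp m n p f g : (forall j, j < p -> g j < n) ->
  select n p g \o select m n f = select m p (f \o g).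
Proof.
move=> g_lt; apply: funext => x; apply: funext => j /=.
by rewrite /select (cube_nth_ord _ (g_lt _ (ltn_ord j))).
Qed.

Lemma prod_select m k m' k' f f' : (forall j, j < k -> f j < m) ->
  prod_map (select m k f) (select m' k' f') =
  select (m + m') (k + k') (fun j => if j < k then f j else m + f' (j - k)).
Proof.
move=> f_lt; apply: funext => x; apply: funext => j.
rewrite /prod_map /select; case: splitP => i ->.
  by rewrite cube_nth_lshift ?f_lt.
by rewrite cube_nth_rshift addKn.
Qed.

End Selection.

Arguments select R : clear implicits.
Arguments eq_select {R m k f g}.
Arguments select_comp {R m n p f g}.

Section GeneratedSelections.
Variables (R : realType) (a : struct_rules) (b : signature).
Local Notation GS := (genS a b).
Local Notation select := (select R).

Lemma genS_select_comp m n p f g h :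
  GS (select m n f) -> GS (select n p g) ->
  (forall j, j < p -> g j < n) -> (forall j, j < p -> h j = f (g j)) ->
  GS (select m p h).
Proof.
move=> GSf GSg g_lt eq_h; rewrite (eq_select eq_h).
by rewrite -[select m p _](select_comp g_lt); apply: genS_comp.
Qed.

Lemma genS_select_prod m k m' k' f f' M K g : (forall j, j < k -> f j < m) ->
  GS (select m k f) -> GS (select m' k' f') -> M = m + m' -> K = k + k' ->
  (forall j, j < K -> g j = if j < k then f j else m + f' (j - k)) ->
  GS (select M K g).
Proof.
move=> f_lt GSf GSf' -> -> eq_g; rewrite (eq_select eq_g) -prod_select //.
exact: genS_prod.
Qed.

Lemma genS_select_id m f : (forall j, j < m -> f j = j) -> GS (select m m f).
Proof.
move=> f_id; suff -> : select m m f = id by apply: genS_id.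
by apply: funext => x; apply: funext => j; rewrite /select f_id // cube_nthE.
Qed.

Lemma genS_select_bang f : has_w a -> GS (select 1 0 f).
Proof.
move=> Hw; suff -> : select 1 0 f = @bang_map R by apply: genS_weak.
by apply: funext => x; apply: funext => -[].
Qed.

Lemma genS_select_swap f : has_e a -> f 0 = 1 -> f 1 = 0 -> GS (select 2 2 f).
Proof.
move=> He f0 f1; suff -> : select 2 2 f = @swap_map R by apply: genS_exch.
apply: funext => x; apply: funext => -[[|[|//]] lt_j2]; rewrite /select /swap_map /=.
  by rewrite f0 (cube_nth_ord _ (isT : 1 < 2)); congr x; apply: val_inj.
by rewrite f1 (cube_nth_ord _ (isT : 0 < 2)); congr x; apply: val_inj.
Qed.

Lemma genS_select_diag f : has_c a -> f 0 = 0 -> f 1 = 0 -> GS (select 1 2 f).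
Proof.
move=> Hc f0 f1; suff -> : select 1 2 f = @diag_map R by apply: genS_contr.
apply: funext => x; apply: funext => -[[|[|//]] lt_j2];
  by rewrite /select /diag_map /= ?f0 ?f1 (cube_nth_ord _ (isT : 0 < 1));
     congr x; apply: val_inj.
Qed.

Lemma genS_select_copies c : (c = 0 -> has_w a) -> (1 < c -> has_c a) ->
  GS (select 1 c (fun _ => 0)).
Proof.
elim: c => [|[|c] IH] Hw Hc; first exact: genS_select_bang (Hw erefl).
  by apply: genS_select_id => -[].
apply: (@genS_select_comp 1 2 c.+2 (fun _ => 0) (fun j => if j < 1 then 0 else 1)).
- exact: genS_select_diag (Hc isT) _ _.
- apply: (@genS_select_prod 1 1 1 c.+1 (fun _ => 0) (fun _ => 0)) => //.
    by apply: genS_select_id => -[].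
  by apply: IH => // _; apply: Hc.
- by move=> [|j].
- by [].
Qed.

(* The occurrences of variable 0 come first and are copies of it; induction on [m]
   handles the rest. *)
Lemma genS_select_sorted m s : all (gtn m) s -> sorted leq s ->
  has_w a || all (mem s) (iota 0 m) -> has_c a || uniq s ->
  GS (select m (size s) (nth 0 s)).
Proof.
elim: m s => [|m IH] s s_lt s_sorted s_cover s_uniq.
  by case: s s_lt {s_sorted s_cover s_uniq} => //= _; apply: genS_select_id.
set c0 := count_mem 0 s; set s' := [seq i.-1 | i <- s & 0 < i].
have def_s : s = nseq c0 0 ++ map succn s' by apply: sorted_leq_zeros_first.
have size_s : size s = c0 + size s' by rewrite {1}def_s size_cat size_nseq size_map.
apply: (@genS_select_prod 1 c0 m (size s') (fun _ => 0) (nth 0 s')) => //.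
- apply: genS_select_copies => [c0_0|c0_gt1].
    case/orP: s_cover => // /allP/(_ 0); rewrite mem_iota /= => /(_ isT).
    by rewrite -has_pred1 has_count -/c0 c0_0.
  case/orP: s_uniq => // s_uniq.
  by move: c0_gt1; rewrite /c0 count_uniq_mem //; case: (0 \in s).
- apply: IH.
  + apply/allP => x /mapP[i]; rewrite mem_filter => /andP[i_gt0 /(allP s_lt) lt_i] ->.
    by rewrite /= -ltnS (prednK i_gt0).
  + apply: (@homo_sorted _ _ _ leq); first by move=> [|i] [|j].
    exact/sorted_filter/s_sorted/leq_trans.
  + case/orP: s_cover => [->//|/allP s_cover]; apply/orP; right.
    apply/allP => i; rewrite mem_iota /= => lt_im; apply/mapP; exists i.+1 => //.
    by rewrite mem_filter /=; apply: s_cover; rewrite mem_iota.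
  + case/orP: s_uniq => [->//|s_uniq]; apply/orP; right.
    rewrite map_inj_in_uniq ?filter_uniq // => i j.
    by rewrite !mem_filter => /andP[/prednK i_pos _] /andP[/prednK j_pos _];
      move=> eq_ij; rewrite -i_pos -j_pos eq_ij.
- move=> j lt_js; rewrite {1}def_s nth_cat size_nseq.
  case: ifP => [lt_jc0|ge_jc0]; first by rewrite nth_nseq lt_jc0.
  rewrite (nth_map 0) //; lia.
Qed.

Lemma genS_select_rot j : has_e a ->
  GS (select j.+1 j.+1 (fun i => if i == 0 then j else i.-1)).
Proof.
move=> He; elim: j => [|j IH]; first by apply: genS_select_id => -[].
apply: (@genS_select_comp j.+2 j.+2 j.+2
   (fun i => if i < 1 then 0 else 1 + (if i - 1 == 0 then j else (i - 1).-1))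
   (fun i => if i < 2 then (if i == 0 then 1 else 0) else 2 + (i - 2))).
- apply: (@genS_select_prod 1 1 j.+1 j.+1 (fun _ => 0)
                                        (fun i => if i == 0 then j else i.-1)) => //.
  by apply: genS_select_id => -[].
- apply: (@genS_select_prod 2 2 j j (fun i => if i == 0 then 1 else 0) id) => //.
  + by move=> [|[|]].
  + exact: genS_select_swap.
  + exact: genS_select_id.
- move=> [|[|i]] lt_i //=; lia.
- move=> [|[|i]] lt_i //=; lia.
Qed.

Lemma genS_select_move i j K : has_e a -> K = i + j.+1 ->
  GS (select K K (fun x => if x < i then x else if x == i then i + j else x.-1)).
Proof.
move=> He ->; apply: (@genS_select_prod i i j.+1 j.+1 id) => //.
- exact: genS_select_id.
- exact: genS_select_rot.
- move=> x _; case: ifP => // le_ix; case: eqP => [->|ne_xi]; first by rewrite subnn.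
  have -> : (x - i == 0) = false by apply/eqP; lia.
  lia.
Qed.

(* Remove [k] from the permutation, permute the rest, then move [k] into place. *)
Lemma genS_select_perm k Is : has_e a -> perm_eq Is (iota 0 k) ->
  GS (select k k (nth 0 Is)).
Proof.
move=> He; elim: k Is => [|k IH] Is Is_perm; first exact: genS_select_id.
have k_in : k \in Is by rewrite (perm_mem Is_perm) mem_iota ltnSn.
move: Is_perm; case/splitPr: k_in => p q pkq_perm.
have pq_perm : perm_eq (p ++ q) (iota 0 k).
  move: pkq_perm; rewrite -addn1 iotaD /= -cat1s perm_catCA /= => pkq_perm.
  by rewrite -(perm_cons k) (perm_trans pkq_perm) // perm_catC.
have size_pq : size p + size q = k by rewrite -size_cat (perm_size pq_perm) size_iota.
apply: (@genS_select_comp k.+1 k.+1 k.+1 (nth 0 (p ++ q ++ [:: k]))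
   (fun x => if x < size p then x else if x == size p then size p + size q else x.-1)).
- apply: (@genS_select_prod k k 1 1 (nth 0 (p ++ q)) (fun _ => 0)); rewrite ?addn1 //.
  + by move=> j lt_jk; apply: nth_perm_iota_lt pq_perm _; rewrite size_cat size_pq.
  + exact: IH.
  + by apply: genS_select_id => -[].
  + move=> j lt_jk; rewrite catA nth_cat size_cat size_pq.
    case: ifP => // ge_jk; have -> : j = k by lia.
    by rewrite subnn addn0.
- by apply: genS_select_move; rewrite // -size_pq addnS.
- by move=> x lt_xk; case: ifP => _; [|case: ifP]; lia.
- move=> x lt_xk; rewrite catA.
  case: ifP => [lt_xp|ge_xp]; first by rewrite !nth_cat size_cat lt_xp ltn_addr.
  case: eqP => [->|ne_xp].
    by rewrite nth_cat ltnn subnn /= nth_cat size_cat ltnn subnn.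
  rewrite nth_cat ge_xp nth_cat size_cat.
  have -> : x - size p = (x.-1 - size p).+1 by lia.
  have -> : x.-1 < size p + size q by lia.
  by rewrite nth_cat; have -> : x.-1 < size p = false by lia.
Qed.

Lemma genS_select_exch m s : has_e a -> all (gtn m) s ->
  has_w a || all (mem s) (iota 0 m) -> has_c a || uniq s ->
  GS (select m (size s) (nth 0 s)).
Proof.
move=> He s_lt s_cover s_uniq; set t := sort leq s.
have perm_st : perm_eq s t by rewrite perm_sym perm_sort.
have [Is Is_perm def_s] := perm_iotaP 0 perm_st.
have size_t : size t = size s by rewrite (perm_size perm_st).
have size_Is : size Is = size s by rewrite (perm_size Is_perm) size_iota.
apply: (@genS_select_comp m (size t) (size s) (nth 0 t) (nth 0 Is)).
- apply: genS_select_sorted.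
  + by rewrite -(perm_all _ perm_st).
  + exact: sort_sorted leq_total _.
  + case/orP: s_cover => [->//|/allP cover]; apply/orP; right.
    apply/allP => i /cover.
    by rewrite /= -(perm_mem perm_st).
  + by rewrite -(perm_uniq perm_st).
- by rewrite -size_t; apply: genS_select_perm.
- by move=> j lt_js; apply: nth_perm_iota_lt Is_perm _; rewrite size_Is.
- by move=> j lt_js; rewrite {1}def_s (nth_map 0) // size_Is.
Qed.

Lemma genS_select_occ m s : all (gtn m) s ->
  has_w a || all (mem s) (iota 0 m) ->
  has_e a || sorted leq s -> has_c a || uniq s ->
  GS (select m (size s) (nth 0 s)).
Proof.
move=> s_lt s_cover; case He: (has_e a) => /= s_sorted s_uniq.
  exact: genS_select_exch.
exact: genS_select_sorted.
Qed.

End GeneratedSelections.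

(** * Terms evaluated occurrence by occurrence *)

Section OccurrenceEvaluation.
Variables (R : realType) (a : struct_rules) (b : signature).
Local Notation I := (unit_interval R).
Local Notation cube := (cube R).
Local Notation GS := (genS a b).

(* The [i]-th variable occurrence of [t] is read from [y i]. *)
Fixpoint eval_occ m (t : term m) (y : nat -> I) : I :=
  match t with
  | tVar _ => y 0
  | tZero => i0 R
  | tOne => i1 R
  | tJoin t1 t2 => imax (eval_occ t1 y) (eval_occ t2 (fun i => y (i + size (occ t1))))
  | tMeet t1 t2 => imin (eval_occ t1 y) (eval_occ t2 (fun i => y (i + size (occ t1))))
  | tNeg t1 => icompl (eval_occ t1 y)
  end.

Fixpoint evals_occ m (ts : seq (term m)) (y : nat -> I) (j : nat) : I :=
  match ts with
  | [::] => i0 R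
  | t :: ts' => if j is j'.+1 then evals_occ ts' (fun i => y (i + size (occ t))) j'
                else eval_occ t y
  end.

Lemma eq_eval_occ m (t : term m) y y' :
  (forall i, i < size (occ t) -> y i = y' i) -> eval_occ t y = eval_occ t y'.
Proof.
elim: t y y' => [i|||t1 IH1 t2 IH2|t1 IH1 t2 IH2|t1 IH1] y y' eq_y //=;
  cbn [occ] in eq_y; rewrite ?size_cat in eq_y.
- exact: eq_y.
- by rewrite (IH1 y y') ?(IH2 _ (fun i => y' (i + size (occ t1)))) // => i ?;
    apply: eq_y; lia.
- by rewrite (IH1 y y') ?(IH2 _ (fun i => y' (i + size (occ t1)))) // => i ?;
    apply: eq_y; lia.
- by rewrite (IH1 y y').
Qed.

Lemma eq_evals_occ m (ts : seq (term m)) y y' j :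
  (forall i, i < size (flatten (map (@occ m) ts)) -> y i = y' i) ->
  evals_occ ts y j = evals_occ ts y' j.
Proof.
elim: ts y y' j => [//|t ts IH] y y' [|j] /= eq_y; rewrite size_cat in eq_y.
  by apply: eq_eval_occ => i ?; apply: eq_y; lia.
by apply: IH => i ?; apply: eq_y; lia.
Qed.

Lemma eval_occ_eval m (x : cube m) (t : term m) :
  eval_occ t (fun i => cube_nth x (nth 0 (occ t) i)) = eval R x t.
Proof.
elim: t => [i|||t1 IH1 t2 IH2|t1 IH1 t2 IH2|t1 IH1] //=; last by rewrite IH1.
- by rewrite cube_nthE.
- rewrite -IH1 -IH2; congr imax.
    by apply: eq_eval_occ => i lt_i; rewrite nth_cat lt_i.
  by congr eval_occ; apply: funext => i; rewrite nth_cat ltnNge leq_addl addnK.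
- rewrite -IH1 -IH2; congr imin.
    by apply: eq_eval_occ => i lt_i; rewrite nth_cat lt_i.
  by congr eval_occ; apply: funext => i; rewrite nth_cat ltnNge leq_addl addnK.
Qed.

Lemma evals_occ_eval m (x : cube m) (ts : seq (term m)) j :
  evals_occ ts (fun i => cube_nth x (nth 0 (flatten (map (@occ m) ts)) i)) j =
  eval R x (nth tZero ts j).
Proof.
elim: ts j => [|t ts IH] [|j] //=.
  by rewrite -eval_occ_eval; apply: eq_eval_occ => i lt_i; rewrite nth_cat lt_i.
rewrite -IH; congr evals_occ; apply: funext => i.
by rewrite nth_cat ltnNge leq_addl addnK.
Qed.

Definition occ_map m (t : term m) k : cube k -> cube 1 :=
  fun y _ => eval_occ t (cube_nth y).

Definition occs_map m (ts : seq (term m)) k n : cube k -> cube n :=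
  fun y j => evals_occ ts (cube_nth y) j.

Arguments occ_map {m} t k.
Arguments occs_map {m} ts k n.

Lemma occ_map_bin (op : I -> I -> I) m (t1 t2 : term m) k1 k2 :
  k1 = size (occ t1) ->
  (fun (y : cube (k1 + k2)) (_ : 'I_1) =>
     op (eval_occ t1 (cube_nth y)) (eval_occ t2 (fun i => cube_nth y (i + k1)))) =
  (fun (x : cube 2) (_ : 'I_1) => op (x ord0) (x ord_max))
    \o prod_map (occ_map t1 k1) (occ_map t2 k2).
Proof.
move=> def_k1; apply: funext => y; apply: funext => _ /=; rewrite /prod_map.
case: splitP => [? _|//]; case: splitP => [[[|//] ?] //|? _] /=.
congr op; first by apply: eq_eval_occ => i; rewrite -def_k1 => /cube_nth_lshift.
by congr eval_occ; apply: funext => i; rewrite cube_nth_rshift (addnC i).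
Qed.

Lemma genS_occ_map m (t : term m) : in_sig b t -> GS (occ_map t (size (occ t))).
Proof.
elim: t => [i|||t1 IH1 t2 IH2|t1 IH1 t2 IH2|t1 IH1] /=.
- move=> _; suff -> : occ_map (tVar i) 1 = id by apply: genS_id.
  by apply: funext => y; apply: funext => -[[|//] lt_01]; rewrite /occ_map /= cube_nth_ord.
- by move=> _; apply: genS_zero.
- by move=> _; apply: genS_one.
- case/and3P=> Hj /IH1 GS1 /IH2 GS2; rewrite size_cat.
  rewrite /occ_map /= (occ_map_bin (@imax R)) //.
  by apply: genS_comp (genS_prod GS1 GS2) _; apply: genS_max.
- case/and3P=> Hm /IH1 GS1 /IH2 GS2; rewrite size_cat.
  rewrite /occ_map /= (occ_map_bin (@imin R)) //.
  by apply: genS_comp (genS_prod GS1 GS2) _; apply: genS_min.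
- case/andP=> Hn /IH1 GS1.
  rewrite -[occ_map _ _]/(@compl_map R \o occ_map t1 _).
  by apply: genS_comp GS1 _; apply: genS_compl.
Qed.

Lemma genS_occs_map m (ts : seq (term m)) : all (@in_sig b m) ts ->
  GS (occs_map ts (size (flatten (map (@occ m) ts))) (size ts)).
Proof.
elim: ts => [|t ts IH] /=.
  move=> _; rewrite (_ : @occs_map m [::] 0 0 = id); first exact: genS_id.
  by apply: funext => y; apply: funext => -[].
case/andP=> /genS_occ_map GSt /IH GSts; rewrite size_cat.
suff -> : occs_map (t :: ts) (size (occ t) + size (flatten (map (@occ m) ts)))
                   (size ts).+1 = prod_map (occ_map t _) (occs_map ts _ (size ts)).
  exact (genS_prod GSt GSts).
apply: funext => y; apply: funext => j; rewrite /prod_map /occs_map /occ_map.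
case: splitP => [k ->|k ->]; rewrite ?ord1 /=.
  by apply: eq_eval_occ => i lt_i; rewrite cube_nth_lshift.
by congr evals_occ; apply: funext => i; rewrite cube_nth_rshift (addnC i).
Qed.

Lemma occ_lt m (t : term m) : all (gtn m) (occ t).
Proof.
elim: t => [i|||t1 IH1 t2 IH2|t1 IH1 t2 IH2|t1 IH1] //=; rewrite ?all_cat ?IH1 ?IH2 //.
by rewrite andbT ltn_ord.
Qed.

Lemma tuple_occ_lt m n (ts : n.-tuple (term m)) : all (gtn m) (tuple_occ ts).
Proof. by rewrite /tuple_occ; elim: (tval ts) => //= t s IH; rewrite all_cat IH occ_lt. Qed.

Lemma interp_select_occ m n (ts : n.-tuple (term m)) :
  interp R ts = occs_map ts (size (tuple_occ ts)) n
                \o select R m (size (tuple_occ ts)) (nth 0 (tuple_occ ts)).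
Proof.
apply: funext => x; apply: funext => j /=.
rewrite /interp (tnth_nth tZero) -evals_occ_eval /occs_map.
by apply: eq_evals_occ => i lt_i; rewrite /select (cube_nth_ord _ lt_i).
Qed.

Lemma genS_interp m n (ts : n.-tuple (term m)) :
  admissible_tuple a b ts -> GS (interp R ts).
Proof.
case/and4P=> ts_sig ts_cover ts_sorted ts_uniq; rewrite interp_select_occ.
apply: genS_comp; first exact: genS_select_occ (tuple_occ_lt ts) _ _ _.
by have := genS_occs_map ts_sig; rewrite size_tuple.
Qed.

End OccurrenceEvaluation.

(** * Functoriality of the interpretation *)

Section Functoriality.
Variables (R : realType) (a : struct_rules) (b : signature).
Local Notation cube := (cube R).

Lemma admissible_id m : admissible_tuple a b (id_tuple m).
Proof.
have occ_id : tuple_occ (id_tuple m) = iota 0 m.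
  by rewrite /tuple_occ /= -map_comp -val_enum_ord; elim: (enum 'I_m) => //= i s ->.
rewrite /admissible_tuple occ_id iota_sorted iota_uniq !orbT !andbT.
apply/andP; split; first by rewrite all_map; apply/allP.
by apply/orP; right; apply/allP.
Qed.

Lemma interp_id m : interp R (id_tuple m) = id.
Proof. by apply: funext => x; apply: funext => k; rewrite /interp tnth_mktuple. Qed.

Lemma in_sig_subst m n (ts : n.-tuple (term m)) (t : term n) :
  all (@in_sig b m) ts -> in_sig b t -> in_sig b (subst ts t).
Proof.
move=> ts_sig; elim: t => [i|||t1 IH1 t2 IH2|t1 IH1 t2 IH2|t1 IH1] //=.
- by move=> _; apply: (all_tnthP ts_sig).
- by case/and3P=> -> /IH1 -> /IH2 ->.
- by case/and3P=> -> /IH1 -> /IH2 ->.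
- by case/andP=> -> /IH1 ->.
Qed.

Lemma occ_subst m n (ts : n.-tuple (term m)) (t : term n) :
  occ (subst ts t) = flatten (map (nth [::] (map (@occ m) ts)) (occ t)).
Proof.
elim: t => [i|||t1 IH1 t2 IH2|t1 IH1 t2 IH2|t1 IH1] //=.
- by rewrite cats0 (nth_map tZero) ?size_tuple // (tnth_nth tZero).
- by rewrite IH1 IH2 map_cat flatten_cat.
- by rewrite IH1 IH2 map_cat flatten_cat.
Qed.

Lemma tuple_occ_comp m n p (ts : n.-tuple (term m)) (us : p.-tuple (term n)) :
  tuple_occ (comp_tuple ts us) =
  flatten (map (nth [::] (map (@occ m) ts)) (tuple_occ us)).
Proof.
rewrite /tuple_occ /= -map_comp (eq_map (occ_subst ts)).
by elim: (tval us) => //= u us' ->; rewrite map_cat flatten_cat.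
Qed.

Lemma admissible_comp m n p (ts : n.-tuple (term m)) (us : p.-tuple (term n)) :
  admissible_rules a ->
  admissible_tuple a b ts -> admissible_tuple a b us ->
  admissible_tuple a b (comp_tuple ts us).
Proof.
move=> Ha /and4P[ts_sig ts_cover ts_sorted ts_uniq].
case/and4P=> us_sig us_cover us_sorted us_uniq.
set O := map (@occ m) ts.
have size_O : size O = n by rewrite size_map size_tuple.
have us_lt : all (gtn (size O)) (tuple_occ us) by rewrite size_O tuple_occ_lt.
rewrite /admissible_tuple tuple_occ_comp; apply/and4P; split.
- by rewrite all_map; apply: sub_all us_sig => u; apply: in_sig_subst.
- case: (has_w a) ts_cover us_cover => //= /allP ts_cover /allP us_cover.
  apply/allP => i /ts_cover /flattenP[s /(nthP [::])[j lt_jn <-] s_i].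
  apply/flattenP; exists (nth [::] O j) => //; apply: map_f.
  by apply: us_cover; rewrite mem_iota -size_O.
- (* Without exchange there is no contraction, so the occurrence list of [us]
     increases strictly and selects a subsequence of that of [ts]. *)
  move: Ha; rewrite /admissible_rules.
  case: (has_e a) ts_sorted us_sorted => //= ts_sorted us_sorted.
  case: (has_c a) ts_uniq us_uniq => //= _ us_uniq _.
  apply: (subseq_sorted leq_trans _ ts_sorted); apply: sorted_subseq_flatten_nth us_lt.
  by rewrite ltn_sorted_uniq_leq us_uniq.
- case: (has_c a) ts_uniq us_uniq => //= ts_uniq us_uniq.
  have perm_u : perm_eq (tuple_occ us) (sort leq (tuple_occ us)).
    by rewrite perm_sym perm_sort.
  rewrite (perm_uniq (perm_flatten (perm_map _ perm_u))).
  apply: subseq_uniq ts_uniq; apply: sorted_subseq_flatten_nth.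
    by rewrite ltn_sorted_uniq_leq sort_uniq us_uniq sort_sorted.
  by rewrite -(perm_all _ perm_u).
Qed.

Lemma eval_subst m n (ts : n.-tuple (term m)) (t : term n) (x : cube m) :
  eval R x (subst ts t) = eval R (interp R ts x) t.
Proof. by elim: t => //= [t1 -> t2 ->|t1 -> t2 ->|t1 ->]. Qed.

Lemma interp_comp m n p (ts : n.-tuple (term m)) (us : p.-tuple (term n)) :
  interp R (comp_tuple ts us) = interp R us \o interp R ts.
Proof.
apply: funext => x; apply: funext => k.
by rewrite /interp /comp_tuple /= tnth_map eval_subst.
Qed.

Lemma occ_rename m m' (f : 'I_m -> 'I_m') (g : nat -> nat) (t : term m) :
  (forall i, nat_of_ord (f i) = g i) -> occ (rename f t) = map g (occ t).
Proof.
move=> eq_fg; elim: t => [i|||t1 IH1 t2 IH2|t1 IH1 t2 IH2|t1 IH1] //=.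
- by rewrite eq_fg.
- by rewrite IH1 IH2 map_cat.
- by rewrite IH1 IH2 map_cat.
Qed.

Lemma in_sig_rename m m' (f : 'I_m -> 'I_m') (t : term m) :
  in_sig b (rename f t) = in_sig b t.
Proof. by elim: t => //= [t1 -> t2 ->|t1 -> t2 ->|t1 ->]. Qed.

Lemma eval_rename m m' (f : 'I_m -> 'I_m') (t : term m) (x : cube m') :
  eval R x (rename f t) = eval R (fun i => x (f i)) t.
Proof. by elim: t => //= [t1 -> t2 ->|t1 -> t2 ->|t1 ->]. Qed.

Lemma tuple_occ_tensor m n m' n' (ts : n.-tuple (term m)) (ts' : n'.-tuple (term m')) :
  tuple_occ (tensor_tuple ts ts') = tuple_occ ts ++ map (addn m) (tuple_occ ts').
Proof.
rewrite /tuple_occ /tensor_tuple /= map_cat flatten_cat -!map_comp map_flatten.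
congr (_ ++ _).
  by elim: (tval ts) => //= t s ->; rewrite (@occ_rename _ _ _ id) ?map_id.
by elim: (tval ts') => //= t s ->; rewrite (@occ_rename _ _ _ (addn m)) ?map_cat.
Qed.

Lemma admissible_tensor m n m' n' (ts : n.-tuple (term m)) (ts' : n'.-tuple (term m')) :
  admissible_tuple a b ts -> admissible_tuple a b ts' ->
  admissible_tuple a b (tensor_tuple ts ts').
Proof.
have ts_lt := tuple_occ_lt ts.
have not_in_ts i : m <= i -> i \notin tuple_occ ts.
  by move=> le_mi; apply/negP => /(allP ts_lt); rewrite /= ltnNge le_mi.
case/and4P=> ts_sig ts_cover ts_sorted ts_uniq.
case/and4P=> ts'_sig ts'_cover ts'_sorted ts'_uniq.
rewrite /admissible_tuple tuple_occ_tensor; apply/and4P; split.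
- rewrite /tensor_tuple /= all_cat !all_map.
  by apply/andP; split; [apply: sub_all ts_sig | apply: sub_all ts'_sig] => t;
    rewrite /= in_sig_rename.
- case: (has_w a) ts_cover ts'_cover => //= /allP ts_cover /allP ts'_cover.
  apply/allP => i; rewrite mem_iota add0n /= mem_cat => lt_i.
  have [lt_im|le_mi] := ltnP i m; first by rewrite ts_cover ?mem_iota.
  apply/orP; right; apply/mapP; exists (i - m); last by rewrite subnKC.
  by rewrite ts'_cover // mem_iota add0n ltn_subLR.
- case: (has_e a) ts_sorted ts'_sorted => //= ts_sorted ts'_sorted.
  exact: sorted_cat_map_addn.
- case: (has_c a) ts_uniq ts'_uniq => //= ts_uniq ts'_uniq.
  rewrite cat_uniq ts_uniq (map_inj_uniq (@addnI m)) ts'_uniq andbT.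
  by apply/hasPn => _ /mapP[i _ ->]; apply: not_in_ts; apply: leq_addr.
Qed.

Lemma interp_tensor m n m' n' (ts : n.-tuple (term m)) (ts' : n'.-tuple (term m')) :
  interp R (tensor_tuple ts ts') = prod_map (interp R ts) (interp R ts').
Proof.
apply: funext => x; apply: funext => k.
rewrite /interp /prod_map /tensor_tuple; case: splitP => i def_k.
  by rewrite (_ : k = lshift n' i) ?tnth_lshift ?tnth_map ?eval_rename //; apply: val_inj.
by rewrite (_ : k = rshift n i) ?tnth_rshift ?tnth_map ?eval_rename //; apply: val_inj.
Qed.

Lemma genS_is_interp m n (f : cube m -> cube n) : admissible_rules a ->
  genS a b f -> exists ts : n.-tuple (term m), admissible_tuple a b ts /\ interp R ts = f.
Proof.
move=> Ha; elim=> {m n f}.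
- by move=> n; exists (id_tuple n); rewrite admissible_id interp_id.
- exists [tuple tZero]; split; first by rewrite /admissible_tuple /= !orbT.
  by apply: funext => x; apply: funext => -[[|k] lt_k1].
- exists [tuple tOne]; split; first by rewrite /admissible_tuple /= !orbT.
  by apply: funext => x; apply: funext => -[[|k] lt_k1].
- move=> Hj; exists [tuple tJoin (tVar ord0) (tVar (@ord_max 1))].
  split; first by rewrite /admissible_tuple /= Hj !orbT.
  by apply: funext => x; apply: funext => -[[|k] lt_k1].
- move=> Hm; exists [tuple tMeet (tVar ord0) (tVar (@ord_max 1))].
  split; first by rewrite /admissible_tuple /= Hm !orbT.
  by apply: funext => x; apply: funext => -[[|k] lt_k1].
- move=> Hn; exists [tuple tNeg (tVar (@ord0 0))].
  split; first by rewrite /admissible_tuple /= Hn !orbT.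
  by apply: funext => x; apply: funext => -[[|k] lt_k1].
- move=> Hw; exists [tuple]; split; first by rewrite /admissible_tuple /= Hw !orbT.
  by apply: funext => x; apply: funext => -[].
- move=> He; exists [tuple tVar (@ord_max 1); tVar ord0].
  split; first by rewrite /admissible_tuple /= He !orbT.
  by apply: funext => x; apply: funext => -[[|[|k]] lt_k2].
- move=> Hc; exists [tuple tVar (@ord0 0); tVar ord0].
  split; first by rewrite /admissible_tuple /= Hc !orbT.
  by apply: funext => x; apply: funext => -[[|[|k]] lt_k2].
- move=> m n p f g _ [ts [ts_adm <-]] _ [us [us_adm <-]].
  by exists (comp_tuple ts us); rewrite admissible_comp ?interp_comp.
- move=> m n m' n' f g _ [ts [ts_adm <-]] _ [ts' [ts'_adm <-]].
  by exists (tensor_tuple ts ts'); rewrite admissible_tensor ?interp_tensor.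
Qed.

End Functoriality.

Theorem proposition1 (R : realType) (a : struct_rules) (b : signature) :
  admissible_rules a -> admissible_sig b ->
  [/\ (* identities *)
      forall m, admissible_tuple a b (id_tuple m) /\
                interp R (id_tuple m) = id,
      (* composition *)
      forall m n p (ts : n.-tuple (term m)) (us : p.-tuple (term n)),
        admissible_tuple a b ts -> admissible_tuple a b us ->
        admissible_tuple a b (comp_tuple ts us) /\
        interp R (comp_tuple ts us) = interp R us \o interp R ts,
      (* monoidal product *)
      forall m n m' n' (ts : n.-tuple (term m)) (ts' : n'.-tuple (term m')),
        admissible_tuple a b ts -> admissible_tuple a b ts' ->
        admissible_tuple a b (tensor_tuple ts ts') /\
        interp R (tensor_tuple ts ts') = prod_map (interp R ts) (interp R ts') &
      (* hom-sets: image of C_(a,b)([m],[n]) is exactly S_(a,b)([0,1]^m,[0,1]^n) *)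
      forall m n (f : cube R m -> cube R n),
        genS a b f <->
        exists ts : n.-tuple (term m), admissible_tuple a b ts /\ interp R ts = f].
Proof.
move=> Ha _; split.
- by move=> m; rewrite admissible_id interp_id.
- by move=> m n p ts us ts_adm us_adm; rewrite admissible_comp ?interp_comp.
- by move=> m n m' n' ts ts' ts_adm ts'_adm; rewrite admissible_tensor ?interp_tensor.
- move=> m n f; split; first exact: genS_is_interp.
  by case=> ts [ts_adm <-]; apply: genS_interp.
Qed.
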